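(* Let $(\mathbf x,\mathbf p,\mu)$ be a deterministic TFM satisfying weak UIC and $2$-weak-SCP, and let $\mathbf b=(b_1,\dots,b_m)$ be a bid vector. Suppose there are three distinct users $i,j,k$ such that $x_i(\mathbf b_{-k},0)=x_j(\mathbf b_{-k},0)=1$, $b_i-p(\mathbf b_{-k},0)>b_k$ and $b_j-p(\mathbf b_{-k},0)>b_k$. Then $x_i(\mathbf b)=x_j(\mathbf b)=1$ and $p(\mathbf b)\le p(\mathbf b_{-k},0)+b_k/2$.
   Context: Setting (TFM). Each user $i$ has a true value $v_i\ge0$ and submits a single bid $b_i\ge0$; $\mathbf b=(b_1,\dots,b_m)$, $(\mathbf b_{-k},0)$ the vector with user $k$'s bid replaced by $0$. A TFM has an inclusion rule (run by the miner, choosing at most $B$ bids) and confirmation, payment, miner-revenue rules (run by the blockchain on included bids); the mechanism treats users symmetrically. Composing the honest inclusion rule with the others gives deterministic $(\mathbf x,\mathbf p,\mu)$: $x_i(\mathbf b)\in\{0,1\}$ indicates confirmation, $p_i(\mathbf b)\le b_i$ the payment ($0$ if unconfirmed), $\mu(\mathbf b)$ the miner revenue. Strategic players (a user, the miner, or the miner with some users) may bid untruthfully after seeing all bids, inject fake bids (true value $0$), and (if the miner is involved) include any at most $B$ available bids. Weak ($1$-strict) utility: miner revenue (if the miner is in the player) plus $v-p$ for each confirmed transaction of the player (true value $v$, payment $p$), minus $(b-v)$ for each unconfirmed transaction of the player with bid $b>v$. Weak UIC: with an honest miner, each user's weak utility is maximized by truthful bidding without fake bids, whatever the other bids. $c$-weak-SCP: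 for every coalition of the miner with between $1$ and $c$ users, joint weak utility is maximized by truthful bidding and honest miner behavior, whatever the other bids. Universal payment: for mechanisms satisfying weak UIC and $2$-weak-SCP, all users confirmed under $\mathbf b$ pay the same amount; $p(\mathbf b)$ denotes this common payment, and $p(\mathbf b)=0$ if no user is confirmed under $\mathbf b$. *)

From Stdlib Require Import Reals Lra List Arith Permutation.
Import ListNotations.
Open Scope R_scope.

(** Users are identified with positions in the bid
    vector (a list R).  The miner runs [incl] (returns indices of the included
    bids); the blockchain runs [conf], [pay], [rev] on the block, i.e. the list
    of included bids, in the order of the index list. *)
Record TFM := mkTFM {
  cap  : nat;
  incl : list R -> list nat;
  conf : list R -> list bool;    (* confirmation rule, per block position *)
  pay  : list R -> list R;       (* payment rule, per block position *)
  rev  : list R -> R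
}.

Definition sumR (l : list R) : R := fold_right Rplus 0 l.
Definition nonneg_list (l : list R) : Prop := forall r, In r l -> 0 <= r.

Fixpoint pos (t : nat) (I : list nat) : option nat :=
  match I with
  | [] => None
  | a :: I' => if Nat.eqb a t then Some 0%nat else option_map S (pos t I')
  end.

Definition blk (b : list R) (I : list nat) : list R := map (fun i => nth i b 0) I.

Definition xI (M : TFM) (b : list R) (I : list nat) (t : nat) : bool :=
  match pos t I with Some q => nth q (conf M (blk b I)) false | None => false end.
Definition pI (M : TFM) (b : list R) (I : list nat) (t : nat) : R :=
  match pos t I with Some q => nth q (pay M (blk b I)) 0 | None => 0 end.

Definition x (M : TFM) (b : list R) (t : nat) : bool := xI M b (incl M b) t.
Definition p (M : TFM) (b : list R) (t : nat) : R := pI M b (incl M b) t.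
Definition mu (M : TFM) (b : list R) : R := rev M (blk b (incl M b)).

(** universal payment p(b): the payment of the (first) confirmed user,
    0 if nobody is confirmed *)
Definition univ_pay (M : TFM) (b : list R) : R :=
  match find (fun t => x M b t) (seq 0 (length b)) with
  | Some t => p M b t
  | None => 0
  end.

Definition valid_block (M : TFM) (b : list R) (I : list nat) : Prop :=
  NoDup I /\ (forall i, In i I -> (i < length b)%nat) /\ (length I <= cap M)%nat.

Definition is_perm (n : nat) (s : nat -> nat) : Prop :=
  (forall t, (t < n)%nat -> (s t < n)%nat) /\
  (forall t u, (t < n)%nat -> (u < n)%nat -> s t = s u -> t = u).
Definition permuted (s : nat -> nat) (l : list R) : list R :=
  map (fun t => nth (s t) l 0) (seq 0 (length l)).

Definition tfm_ok (M : TFM) : Prop :=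
  (forall b, valid_block M b (incl M b)) /\
  (forall l t, (t < length l)%nat ->
      nth t (pay M l) 0 <= nth t l 0 /\
      (nth t (conf M l) false = false -> nth t (pay M l) 0 = 0)) /\
  (forall l s, is_perm (length l) s ->
      rev M (permuted s l) = rev M l /\
      (forall t, (t < length l)%nat ->
          nth t (conf M (permuted s l)) false = nth (s t) (conf M l) false /\
          nth t (pay M (permuted s l)) 0 = nth (s t) (pay M l) 0)) /\
  (* symmetry: the honest inclusion rule only looks at bid values *)
  (forall b s, is_perm (length b) s ->
      Permutation (blk b (incl M b)) (blk (permuted s b) (incl M (permuted s b)))).

(** weak (1-strict) utility of the transaction at index t with true value v *)
Definition uutil (M : TFM) (b' : list R) (I : list nat) (t : nat) (v : R) : R :=
  if xI M b' I t then v - pI M b' I t else - Rmax 0 (nth t b' 0 - v).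

Definition dev_vec (b : list R) (C : list nat) (d : nat -> R) (fakes : list R) : list R :=
  map (fun t => if existsb (Nat.eqb t) C then d t else nth t b 0) (seq 0 (length b))
  ++ fakes.

(** joint weak utility of the player (miner if [miner], users C whose true
    values are their truthful bids in b, and the fake bids at positions
    >= length b, of true value 0) when the vector b' is posted and block I is built. *)
Definition coal_util (M : TFM) (miner : bool) (C : list nat) (b b' : list R)
    (I : list nat) : R :=
  (if miner then rev M (blk b' I) else 0)
  + sumR (map (fun c => uutil M b' I c (nth c b 0)) C)
  + sumR (map (fun t => uutil M b' I t 0) (seq (length b) (length b' - length b))).

Definition weak_UIC (M : TFM) : Prop :=
  forall (b : list R) (i : nat) (d : R) (fakes : list R),
    nonneg_list b -> (i < length b)%nat -> 0 <= d -> nonneg_list fakes ->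
    coal_util M false [i] b (dev_vec b [i] (fun _ => d) fakes)
              (incl M (dev_vec b [i] (fun _ => d) fakes))
    <= coal_util M false [i] b b (incl M b).

Definition c_weak_SCP (M : TFM) (c : nat) : Prop :=
  forall (b : list R) (C : list nat) (d : nat -> R) (fakes : list R) (I : list nat),
    nonneg_list b -> NoDup C -> (1 <= length C <= c)%nat ->
    (forall t, In t C -> (t < length b)%nat) ->
    (forall t, In t C -> 0 <= d t) -> nonneg_list fakes ->
    valid_block M (dev_vec b C d fakes) I ->
    coal_util M true C b (dev_vec b C d fakes) I
    <= coal_util M true C b b (incl M b).

Definition zero_at (b : list R) (k : nat) : list R := dev_vec b [k] (fun _ => 0) [].

(** Universal payment comes first: if two confirmed users had different
    payments, raising the lower bid to the higher one keeps that user's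
    payment (weak UIC in both directions), and then the miner can swap the
    two equal bids at no cost, so the coalitions of the miner with one or
    both users (2-weak-SCP in both directions) force the payments to agree.

    For the theorem, let [b'] be [b] with [k]'s bid set to 0.  The miner with
    [k] does not gain by moving from [b'] to [b]; the miner with [k] and [i]
    does not gain by moving from [b] to [b'] unless [i] is confirmed in [b];
    this gives the confirmations.  Finally the miner with [i] and [j] can,
    from [b], simulate the block of [b'] by injecting a fake zero bid in
    place of [k]; together with the first inequality this yields
    [2 p(b) <= 2 p(b') + b_k]. *)
From Pilot Require Import Defs.
From Stdlib Require Import Reals List Lra Lia.
Import ListNotations.
Open Scope R_scope.

Lemma nth_map_seq0 (f : nat -> R) n t : (t < n)%nat -> nth t (map f (seq 0 n)) 0 = f t.
Proof.
  intros Ht.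
  rewrite nth_indep with (d' := f 0%nat) by (rewrite length_map, length_seq; lia).
  rewrite map_nth, seq_nth by lia. reflexivity.
Qed.

Lemma nonneg_nth l t : nonneg_list l -> 0 <= nth t l 0.
Proof.
  intros Hl. destruct (Nat.lt_ge_cases t (length l)).
  - apply Hl, nth_In; assumption.
  - rewrite nth_overflow by assumption. lra.
Qed.

Lemma nonneg_of_nth l : (forall t, 0 <= nth t l 0) -> nonneg_list l.
Proof.
  intros Hl r Hr. apply In_nth with (d := 0) in Hr as [t [_ <-]]. apply Hl.
Qed.

Lemma nth_app_length (b : list R) : nth (length b) (b ++ [0]) 0 = 0.
Proof. rewrite app_nth2, Nat.sub_diag by lia. reflexivity. Qed.

Lemma existsb_eqb_In t C : existsb (Nat.eqb t) C = true <-> In t C.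
Proof.
  rewrite existsb_exists. split.
  - intros [u [Hu Htu]]. apply Nat.eqb_eq in Htu. subst. assumption.
  - intros Ht. exists t. split; [assumption | apply Nat.eqb_refl].
Qed.

Lemma length_dev_vec b C d f : length (dev_vec b C d f) = (length b + length f)%nat.
Proof. unfold dev_vec. rewrite length_app, length_map, length_seq. reflexivity. Qed.

Lemma dev_vec_agree b C d f c :
  length c = length b ->
  (forall t, In t C -> d t = nth t c 0) ->
  (forall t, ~ In t C -> nth t c 0 = nth t b 0) ->
  dev_vec b C d f = c ++ f.
Proof.
  intros Hlen Hin Hout. unfold dev_vec. f_equal.
  apply nth_ext with 0 0; rewrite length_map, length_seq; [auto |].
  intros t Ht. rewrite nth_map_seq0 by assumption.
  destruct (existsb (Nat.eqb t) C) eqn:E.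
  - apply Hin, existsb_eqb_In, E.
  - symmetry. apply Hout. rewrite <- existsb_eqb_In, E. discriminate.
Qed.

Lemma dev_vec_agree_nil b C d c :
  length c = length b ->
  (forall t, In t C -> d t = nth t c 0) ->
  (forall t, ~ In t C -> nth t c 0 = nth t b 0) ->
  dev_vec b C d [] = c.
Proof. intros. rewrite (dev_vec_agree b C d [] c) by assumption. apply app_nil_r. Qed.

Definition set_bid (b : list R) (a : nat) (v : R) : list R := dev_vec b [a] (fun _ => v) [].

Lemma length_set_bid b a v : length (set_bid b a v) = length b.
Proof. unfold set_bid. rewrite length_dev_vec. simpl. lia. Qed.

Lemma nth_set_bid_same b a v : (a < length b)%nat -> nth a (set_bid b a v) 0 = v.
Proof.
  intros Ha. unfold set_bid, dev_vec.
  rewrite app_nth1 by (rewrite length_map, length_seq; assumption).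
  rewrite nth_map_seq0 by assumption. simpl. rewrite Nat.eqb_refl. reflexivity.
Qed.

Lemma nth_set_bid_other b a v t : t <> a -> nth t (set_bid b a v) 0 = nth t b 0.
Proof.
  intros Hta. destruct (Nat.lt_ge_cases t (length b)) as [Ht | Ht].
  - unfold set_bid, dev_vec.
    rewrite app_nth1 by (rewrite length_map, length_seq; assumption).
    rewrite nth_map_seq0 by assumption. simpl.
    apply Nat.eqb_neq in Hta. rewrite Hta. reflexivity.
  - rewrite !nth_overflow; rewrite ?length_set_bid; auto.
Qed.

Lemma nonneg_set_bid b a v : nonneg_list b -> 0 <= v -> nonneg_list (set_bid b a v).
Proof.
  intros Hb Hv. apply nonneg_of_nth. intros t.
  destruct (Nat.eq_dec t a) as [-> | Hta].
  - destruct (Nat.lt_ge_cases a (length b)).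
    + rewrite nth_set_bid_same; assumption.
    + rewrite nth_overflow by (rewrite length_set_bid; assumption). lra.
  - rewrite nth_set_bid_other by assumption. apply nonneg_nth, Hb.
Qed.

Lemma pos_map_inj (s : nat -> nat) t I :
  (forall u w, s u = s w -> u = w) -> Defs.pos (s t) (map s I) = Defs.pos t I.
Proof.
  intros Hs. induction I as [| a I IH]; simpl; [reflexivity |].
  rewrite IH. destruct (Nat.eqb_spec a t), (Nat.eqb_spec (s a) (s t)); subst;
    solve [reflexivity | exfalso; auto].
Qed.

Lemma pos_Some t I q : Defs.pos t I = Some q -> (q < length I)%nat /\ nth q I 0%nat = t.
Proof.
  revert q. induction I as [| a I IH]; simpl; intros q Hq; [discriminate |].
  destruct (Nat.eqb_spec a t).
  - injection Hq as <-. split; [lia | assumption].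
  - destruct (Defs.pos t I) as [m |]; simpl in Hq; [| discriminate].
    injection Hq as <-. destruct (IH m eq_refl). simpl. split; [lia | assumption].
Qed.

Lemma blk_map (s : nat -> nat) c c' I :
  (forall u, In u I -> nth (s u) c 0 = nth u c' 0) -> blk c (map s I) = blk c' I.
Proof. intros H. unfold blk. rewrite map_map. apply map_ext_in, H. Qed.

Lemma uutil_relabel M (s : nat -> nat) c c' I t u v :
  (forall w w', s w = s w' -> w = w') ->
  (forall w, In w I -> nth (s w) c 0 = nth w c' 0) ->
  s t = u -> nth u c 0 = nth t c' 0 ->
  uutil M c (map s I) u v = uutil M c' I t v.
Proof.
  intros Hs Hc <- Hu. unfold uutil, Defs.xI, pI.
  rewrite pos_map_inj, (blk_map s c c' I Hc), Hu by assumption. reflexivity.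
Qed.

Definition swap (a a' t : nat) : nat :=
  if Nat.eqb t a then a' else if Nat.eqb t a' then a else t.

Lemma swap_inj a a' u w : swap a a' u = swap a a' w -> u = w.
Proof.
  unfold swap.
  destruct (Nat.eqb_spec u a), (Nat.eqb_spec u a'), (Nat.eqb_spec w a), (Nat.eqb_spec w a');
    lia.
Qed.

Lemma swap_l a a' : swap a a' a = a'.
Proof. unfold swap. rewrite Nat.eqb_refl. reflexivity. Qed.

Lemma swap_other a a' t : t <> a -> t <> a' -> swap a a' t = t.
Proof.
  intros H H'. unfold swap. apply Nat.eqb_neq in H, H'. rewrite H, H'. reflexivity.
Qed.

Lemma valid_block_swap M v w I a a' :
  valid_block M v I -> (length v <= length w)%nat ->
  (a < length w)%nat -> (a' < length w)%nat ->
  valid_block M w (map (swap a a') I).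
Proof.
  intros [Hnd [Hlt Hcap]] Hvw Ha Ha'. split; [| split].
  - apply NoDup_map_NoDup_ForallPairs; [| assumption].
    intros u w' _ _. apply swap_inj.
  - intros u Hu. apply in_map_iff in Hu as [t [<- Ht]]. apply Hlt in Ht.
    unfold swap. destruct (Nat.eqb t a), (Nat.eqb t a'); lia.
  - rewrite length_map. assumption.
Qed.

Lemma uutil_conf M v I t w : Defs.xI M v I t = true -> uutil M v I t w = w - pI M v I t.
Proof. intros H. unfold uutil. rewrite H. reflexivity. Qed.

Lemma uutil_unconf_truthful M v I t :
  Defs.xI M v I t = false -> uutil M v I t (nth t v 0) = 0.
Proof.
  intros H. unfold uutil. rewrite H, Rminus_diag, Rmax_left by lra. lra.
Qed.

Lemma uutil_le_value M v I t w w' : w' <= w -> uutil M v I t w' <= uutil M v I t w.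
Proof.
  intros Hw. unfold uutil. destruct (Defs.xI M v I t); [lra |].
  apply Ropp_le_contravar, Rle_max_compat_l. lra.
Qed.

Lemma uutil_value_zero M v I t :
  0 <= nth t v 0 -> uutil M v I t 0 = uutil M v I t (nth t v 0) - nth t v 0.
Proof.
  intros Hv. unfold uutil. destruct (Defs.xI M v I t); [lra |].
  rewrite Rminus_diag, Rminus_0_r, Rmax_right, Rmax_left by lra. lra.
Qed.

Lemma pI_le_bid M v I t : tfm_ok M -> Defs.xI M v I t = true -> pI M v I t <= nth t v 0.
Proof.
  intros [_ [Hpay _]] Hx. unfold Defs.xI, pI in *.
  destruct (Defs.pos t I) as [q |] eqn:E; [| discriminate].
  destruct (pos_Some _ _ _ E) as [Hq Hqt].
  assert (Hlen : (q < length (blk v I))%nat) by (unfold blk; rewrite length_map; assumption).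
  replace (nth t v 0) with (nth q (blk v I) 0); [apply (Hpay _ _ Hlen) |].
  unfold blk. rewrite <- Hqt, <- (map_nth (fun i => nth i v 0) I 0%nat q).
  apply nth_indep. rewrite length_map. assumption.
Qed.

Lemma uutil_truthful_nonneg M v I t : tfm_ok M -> 0 <= uutil M v I t (nth t v 0).
Proof.
  intros Hok. destruct (Defs.xI M v I t) eqn:Hx.
  - rewrite uutil_conf by assumption. pose proof (pI_le_bid M v I t Hok Hx). lra.
  - rewrite uutil_unconf_truthful by assumption. lra.
Qed.

Lemma coal_util_user M b c I a :
  length c = length b -> coal_util M false [a] b c I = uutil M c I a (nth a b 0).
Proof. intros H. unfold coal_util. rewrite H, Nat.sub_diag. simpl. ring. Qed.

Lemma coal_util_single M b c I a :
  length c = length b ->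
  coal_util M true [a] b c I = Defs.rev M (blk c I) + uutil M c I a (nth a b 0).
Proof. intros H. unfold coal_util. rewrite H, Nat.sub_diag. simpl. ring. Qed.

Lemma coal_util_pair M b c I a a' :
  length c = length b ->
  coal_util M true [a; a'] b c I =
  Defs.rev M (blk c I) + uutil M c I a (nth a b 0) + uutil M c I a' (nth a' b 0).
Proof. intros H. unfold coal_util. rewrite H, Nat.sub_diag. simpl. ring. Qed.

Lemma coal_util_pair_fake M b I a a' :
  coal_util M true [a; a'] b (b ++ [0]) I =
  Defs.rev M (blk (b ++ [0]) I) + uutil M (b ++ [0]) I a (nth a b 0)
  + uutil M (b ++ [0]) I a' (nth a' b 0) + uutil M (b ++ [0]) I (length b) 0.
Proof.
  unfold coal_util. rewrite length_app. simpl.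
  replace (length b + 1 - length b)%nat with 1%nat by lia.
  simpl. ring.
Qed.

Ltac rewrite_conf_utils :=
  repeat match goal with
  | Hx : Defs.xI ?M ?v ?I ?t = true, H : context [uutil ?M ?v ?I ?t ?w] |- _ =>
      rewrite (uutil_conf M v I t w Hx) in H
  end.

Section Incentives.

Variable M : TFM.
Hypothesis Hok : tfm_ok M.
Hypothesis Huic : weak_UIC M.
Hypothesis Hscp : c_weak_SCP M 2.

Lemma uic_deviation b c a :
  nonneg_list b -> nonneg_list c -> length c = length b -> (a < length b)%nat ->
  (forall t, t <> a -> nth t c 0 = nth t b 0) ->
  uutil M c (Defs.incl M c) a (nth a b 0) <= uutil M b (Defs.incl M b) a (nth a b 0).
Proof.
  intros Hb Hc Hlen Ha Hout.
  assert (Hdev : dev_vec b [a] (fun _ => nth a c 0) [] = c).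
  { apply dev_vec_agree_nil; [assumption | |].
    - intros t [<- | []]. reflexivity.
    - intros t Ht. apply Hout. intros ->. apply Ht. left. reflexivity. }
  rewrite <- !coal_util_user by reflexivity || assumption.
  rewrite <- Hdev at 1 2. apply Huic; try assumption.
  - apply nonneg_nth, Hc.
  - intros r [].
Qed.

Lemma scp_deviation b c C I :
  nonneg_list b -> nonneg_list c -> length c = length b ->
  NoDup C -> (1 <= length C <= 2)%nat -> (forall t, In t C -> (t < length b)%nat) ->
  (forall t, ~ In t C -> nth t c 0 = nth t b 0) ->
  valid_block M c I ->
  coal_util M true C b c I <= coal_util M true C b b (Defs.incl M b).
Proof.
  intros Hb Hc Hlen Hnd HC HCb Hout HI.
  assert (Hdev : dev_vec b C (fun t => nth t c 0) [] = c)
    by (apply dev_vec_agree_nil; auto).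
  rewrite <- Hdev. apply Hscp; try assumption.
  - intros t _. apply nonneg_nth, Hc.
  - intros r [].
  - rewrite Hdev. assumption.
Qed.

Lemma scp_single_deviation b c a I :
  nonneg_list b -> nonneg_list c -> length c = length b -> (a < length b)%nat ->
  (forall t, t <> a -> nth t c 0 = nth t b 0) ->
  valid_block M c I ->
  Defs.rev M (blk c I) + uutil M c I a (nth a b 0)
  <= mu M b + uutil M b (Defs.incl M b) a (nth a b 0).
Proof.
  intros Hb Hc Hlen Ha Hout HI.
  unfold mu. rewrite <- coal_util_single, <- (coal_util_single M b b) by reflexivity || assumption.
  apply scp_deviation; try assumption.
  - repeat constructor. intros [].
  - simpl. lia.
  - intros t [<- | []]. assumption.
  - intros t Ht. apply Hout. intros ->. apply Ht. left. reflexivity.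
Qed.

Lemma scp_pair_deviation b c a a' I :
  nonneg_list b -> nonneg_list c -> length c = length b -> a <> a' ->
  (a < length b)%nat -> (a' < length b)%nat ->
  (forall t, t <> a -> t <> a' -> nth t c 0 = nth t b 0) ->
  valid_block M c I ->
  Defs.rev M (blk c I) + uutil M c I a (nth a b 0) + uutil M c I a' (nth a' b 0)
  <= mu M b + uutil M b (Defs.incl M b) a (nth a b 0)
     + uutil M b (Defs.incl M b) a' (nth a' b 0).
Proof.
  intros Hb Hc Hlen Haa' Ha Ha' Hout HI.
  unfold mu. rewrite <- coal_util_pair, <- (coal_util_pair M b b) by reflexivity || assumption.
  apply scp_deviation; try assumption.
  - constructor; [intros [H | []]; lia | repeat constructor; intros []].
  - simpl. lia.
  - intros t [<- | [<- | []]]; assumption.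
  - intros t Ht. apply Hout; intros ->; apply Ht; simpl; auto.
Qed.

Lemma scp_fake_zero_bid b a a' I :
  nonneg_list b -> a <> a' -> (a < length b)%nat -> (a' < length b)%nat ->
  valid_block M (b ++ [0]) I ->
  Defs.rev M (blk (b ++ [0]) I) + uutil M (b ++ [0]) I a (nth a b 0)
  + uutil M (b ++ [0]) I a' (nth a' b 0) + uutil M (b ++ [0]) I (length b) 0
  <= mu M b + uutil M b (Defs.incl M b) a (nth a b 0)
     + uutil M b (Defs.incl M b) a' (nth a' b 0).
Proof.
  intros Hb Haa' Ha Ha' HI.
  unfold mu. rewrite <- coal_util_pair_fake, <- (coal_util_pair M b b) by reflexivity.
  assert (Hdev : dev_vec b [a; a'] (fun t => nth t b 0) [0] = b ++ [0])
    by (apply dev_vec_agree; auto).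
  rewrite <- Hdev. apply Hscp; try assumption.
  - constructor; [intros [H | []]; lia | repeat constructor; intros []].
  - simpl. lia.
  - intros t [<- | [<- | []]]; assumption.
  - intros t _. apply nonneg_nth, Hb.
  - intros r [<- | []]. lra.
  - rewrite Hdev. assumption.
Qed.

(* The miner with [j] swaps the slots of the equal bids [i] and [j]: the block
   is unchanged, and [j] receives [i]'s outcome. *)
Lemma equal_bid_slot c i j :
  nonneg_list c -> i <> j -> (i < length c)%nat -> (j < length c)%nat ->
  nth i c 0 = nth j c 0 -> x M c i = true ->
  nth j c 0 - p M c i <= uutil M c (Defs.incl M c) j (nth j c 0).
Proof.
  intros Hc Hij Hi Hj Heq Hx.
  set (I := Defs.incl M c).
  assert (Hslot : forall u, In u I -> nth (swap i j u) c 0 = nth u c 0).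
  { intros u _. unfold swap. destruct (Nat.eqb_spec u i), (Nat.eqb_spec u j); subst; auto. }
  pose proof (scp_single_deviation c c j (map (swap i j) I) Hc Hc eq_refl Hj
    (fun _ _ => eq_refl) (valid_block_swap M c c I i j (proj1 Hok c) (le_n _) Hi Hj)) as H.
  rewrite (blk_map _ _ _ _ Hslot) in H.
  rewrite (uutil_relabel M (swap i j) c c I i j) in H;
    [| apply swap_inj | assumption | apply swap_l | symmetry; assumption].
  rewrite uutil_conf in H by exact Hx.
  unfold mu, p in *. fold I in H |- *. lra.
Qed.

Lemma equal_bid_conf c i j :
  nonneg_list c -> i <> j -> (i < length c)%nat -> (j < length c)%nat ->
  nth i c 0 = nth j c 0 -> x M c i = true -> p M c i < nth j c 0 -> x M c j = true.
Proof.
  intros Hc Hij Hi Hj Heq Hx Hlt.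
  pose proof (equal_bid_slot c i j Hc Hij Hi Hj Heq Hx) as H.
  destruct (x M c j) eqn:Hxj; [reflexivity |].
  rewrite uutil_unconf_truthful in H by exact Hxj. lra.
Qed.

Lemma equal_bid_pay c i j :
  nonneg_list c -> i <> j -> (i < length c)%nat -> (j < length c)%nat ->
  nth i c 0 = nth j c 0 -> x M c i = true -> x M c j = true -> p M c i = p M c j.
Proof.
  intros Hc Hij Hi Hj Heq Hxi Hxj.
  pose proof (equal_bid_slot c i j Hc Hij Hi Hj Heq Hxi) as Hji.
  pose proof (equal_bid_slot c j i Hc (not_eq_sym Hij) Hj Hi (eq_sym Heq) Hxj) as Hij'.
  rewrite uutil_conf in Hji, Hij' by assumption.
  unfold p in *. lra.
Qed.

Lemma raise_bid_conf_pay b i v :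
  nonneg_list b -> (i < length b)%nat -> nth i b 0 < v -> x M b i = true ->
  x M (set_bid b i v) i = true /\ p M (set_bid b i v) i = p M b i.
Proof.
  intros Hb Hi Hv Hx.
  set (c := set_bid b i v).
  assert (Hc : nonneg_list c)
    by (apply nonneg_set_bid; [assumption | pose proof (nonneg_nth b i Hb); lra]).
  assert (Hlen : length c = length b) by apply length_set_bid.
  assert (Hci : nth i c 0 = v) by (apply nth_set_bid_same; assumption).
  pose proof (pI_le_bid M b _ i Hok Hx) as Hpb.
  pose proof (uic_deviation c b i Hc Hb (eq_sym Hlen) ltac:(lia)
    (fun t Ht => eq_sym (nth_set_bid_other b i v t Ht))) as Hdown.
  pose proof (uic_deviation b c i Hb Hc Hlen Hi (nth_set_bid_other b i v)) as Hup.
  unfold x, p in *.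
  rewrite Hci, uutil_conf in Hdown by exact Hx.
  destruct (Defs.xI M c (Defs.incl M c) i) eqn:Hxc.
  - rewrite uutil_conf in Hdown, Hup by exact Hxc.
    rewrite uutil_conf in Hup by exact Hx.
    split; [reflexivity | lra].
  - rewrite <- Hci, uutil_unconf_truthful in Hdown by exact Hxc. lra.
Qed.

Lemma pay_eq_of_bid_lt b i j :
  nonneg_list b -> i <> j -> (i < length b)%nat -> (j < length b)%nat ->
  nth i b 0 < nth j b 0 -> x M b i = true -> x M b j = true -> p M b i = p M b j.
Proof.
  intros Hb Hij Hi Hj Hlt Hxi Hxj.
  set (c := set_bid b i (nth j b 0)).
  assert (Hc : nonneg_list c) by (apply nonneg_set_bid, nonneg_nth; assumption).
  assert (Hlen : length c = length b) by apply length_set_bid.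
  assert (Hci : nth i c 0 = nth j b 0) by (apply nth_set_bid_same; assumption).
  assert (Hcj : nth j c 0 = nth j b 0) by (apply nth_set_bid_other; auto).
  assert (Hout : forall t, t <> i -> nth t c 0 = nth t b 0) by (apply nth_set_bid_other).
  destruct (raise_bid_conf_pay b i (nth j b 0) Hb Hi Hlt Hxi) as [Hxci Hpci].
  fold c in Hxci, Hpci.
  pose proof (pI_le_bid M b _ i Hok Hxi) as Hpb.
  assert (Hxcj : x M c j = true).
  { apply (equal_bid_conf c i j Hc Hij); [lia | lia | congruence | assumption |].
    unfold p in *. lra. }
  assert (Hpc : p M c i = p M c j) by (apply equal_bid_pay; auto; [lia | lia | congruence]).
  (* The miner with [i] gives [mu b = mu c]; the miner with [i] and [j] then
     gives [p b j = p c j]. *)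
  pose proof (scp_single_deviation b c i _ Hb Hc Hlen Hi Hout (proj1 Hok c)) as Hbc1.
  pose proof (scp_single_deviation c b i _ Hc Hb (eq_sym Hlen) ltac:(lia)
    (fun t Ht => eq_sym (Hout t Ht)) (proj1 Hok b)) as Hcb1.
  pose proof (scp_pair_deviation b c i j _ Hb Hc Hlen Hij Hi Hj
    (fun t Ht _ => Hout t Ht) (proj1 Hok c)) as Hbc2.
  pose proof (scp_pair_deviation c b i j _ Hc Hb (eq_sym Hlen) Hij ltac:(lia) ltac:(lia)
    (fun t Ht _ => eq_sym (Hout t Ht)) (proj1 Hok b)) as Hcb2.
  unfold x, p, mu in *.
  rewrite_conf_utils.
  lra.
Qed.

Lemma conf_pay_eq b i j :
  nonneg_list b -> (i < length b)%nat -> (j < length b)%nat ->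
  x M b i = true -> x M b j = true -> p M b i = p M b j.
Proof.
  intros Hb Hi Hj Hxi Hxj.
  destruct (Nat.eq_dec i j) as [<- | Hij]; [reflexivity |].
  destruct (Rtotal_order (nth i b 0) (nth j b 0)) as [Hlt | [Heq | Hgt]].
  - apply pay_eq_of_bid_lt; assumption.
  - apply equal_bid_pay; assumption.
  - symmetry. apply pay_eq_of_bid_lt; auto.
Qed.

Lemma univ_pay_conf b i :
  nonneg_list b -> (i < length b)%nat -> x M b i = true -> univ_pay M b = p M b i.
Proof.
  intros Hb Hi Hx. unfold univ_pay.
  destruct (find (fun t => x M b t) (seq 0 (length b))) as [t |] eqn:E.
  - apply find_some in E as [Ht Hxt]. apply in_seq in Ht.
    apply conf_pay_eq; auto. lia.
  - rewrite (find_none _ _ E i) in Hx; [discriminate | apply in_seq; lia].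
Qed.

Lemma withdraw_bid b k :
  nonneg_list b -> (k < length b)%nat ->
  mu M b + uutil M b (Defs.incl M b) k (nth k b 0) - nth k b 0
  <= mu M (zero_at b k) + uutil M (zero_at b k) (Defs.incl M (zero_at b k)) k 0.
Proof.
  intros Hb Hk. change (zero_at b k) with (set_bid b k 0).
  assert (Hb' : nonneg_list (set_bid b k 0)) by (apply nonneg_set_bid; [assumption | lra]).
  pose proof (scp_single_deviation (set_bid b k 0) b k _ Hb' Hb
    (eq_sym (length_set_bid b k 0)) ltac:(rewrite length_set_bid; assumption)
    (fun t Ht => eq_sym (nth_set_bid_other b k 0 t Ht)) (proj1 Hok b)) as H.
  rewrite nth_set_bid_same in H by assumption.
  rewrite uutil_value_zero in H by (apply nonneg_nth, Hb).
  unfold mu in *. lra.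
Qed.

Lemma conf_of_zero_at b k t :
  nonneg_list b -> (k < length b)%nat -> (t < length b)%nat -> t <> k ->
  x M (zero_at b k) t = true -> nth t b 0 - p M (zero_at b k) t > nth k b 0 ->
  x M b t = true.
Proof.
  intros Hb Hk Ht Htk Hx' Hgap.
  pose proof (withdraw_bid b k Hb Hk) as Hwithdraw.
  change (zero_at b k) with (set_bid b k 0) in *. set (b' := set_bid b k 0) in *.
  assert (Hb' : nonneg_list b') by (apply nonneg_set_bid; [assumption | lra]).
  pose proof (scp_pair_deviation b b' k t _ Hb Hb' (length_set_bid b k 0)
    (not_eq_sym Htk) Hk Ht (fun u Hu _ => nth_set_bid_other b k 0 u Hu)
    (proj1 Hok b')) as H.
  pose proof (uutil_le_value M b' (Defs.incl M b') k (nth k b 0) 0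
    (nonneg_nth b k Hb)) as Hmono.
  destruct (x M b t) eqn:Hxt; [reflexivity | exfalso].
  unfold x, p, mu in *.
  rewrite (uutil_unconf_truthful M b _ t Hxt) in H.
  rewrite_conf_utils.
  lra.
Qed.

Lemma fake_bid_simulation b k i j :
  nonneg_list b -> i <> j -> i <> k -> j <> k ->
  (i < length b)%nat -> (j < length b)%nat -> (k < length b)%nat ->
  x M (zero_at b k) i = true -> x M (zero_at b k) j = true ->
  x M b i = true -> x M b j = true ->
  mu M (zero_at b k) + uutil M (zero_at b k) (Defs.incl M (zero_at b k)) k 0
  + (nth i b 0 - p M (zero_at b k) i) + (nth j b 0 - p M (zero_at b k) j)
  <= mu M b + (nth i b 0 - p M b i) + (nth j b 0 - p M b j).
Proof.
  intros Hb Hij Hik Hjk Hi Hj Hk Hxi' Hxj' Hxi Hxj.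
  change (zero_at b k) with (set_bid b k 0) in *. set (b' := set_bid b k 0) in *.
  set (n := length b). set (I' := Defs.incl M b').
  assert (Hlen : length b' = n) by apply length_set_bid.
  assert (Hnth : forall u, (u < n)%nat -> u <> k -> nth u (b ++ [0]) 0 = nth u b' 0).
  { intros u Hu Huk. rewrite app_nth1 by assumption.
    symmetry. apply nth_set_bid_other, Huk. }
  assert (Hk' : nth n (b ++ [0]) 0 = nth k b' 0)
    by (unfold n, b'; rewrite nth_app_length, nth_set_bid_same; [reflexivity | assumption]).
  assert (Hrel : forall u, In u I' -> nth (swap k n u) (b ++ [0]) 0 = nth u b' 0).
  { intros u Hu. apply (proj1 (proj2 (proj1 Hok b'))) in Hu. rewrite Hlen in Hu.
    destruct (Nat.eq_dec u k) as [-> | Huk].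
    - rewrite swap_l. exact Hk'.
    - rewrite swap_other by lia. apply Hnth; assumption. }
  pose proof (scp_fake_zero_bid b i j (map (swap k n) I') Hb Hij Hi Hj
    (valid_block_swap M b' (b ++ [0]) I' k n (proj1 Hok b')
      ltac:(rewrite Hlen, length_app; lia) ltac:(rewrite length_app; simpl; lia)
      ltac:(rewrite length_app; simpl; lia))) as H.
  fold n in H.
  rewrite (blk_map _ _ _ _ Hrel) in H.
  rewrite (uutil_relabel M (swap k n) (b ++ [0]) b' I' k n) in H;
    [| apply swap_inj | exact Hrel | apply swap_l | exact Hk'].
  rewrite (uutil_relabel M (swap k n) (b ++ [0]) b' I' i i) in H;
    [| apply swap_inj | exact Hrel | apply swap_other; lia | apply Hnth; assumption].
  rewrite (uutil_relabel M (swap k n) (b ++ [0]) b' I' j j) in H;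
    [| apply swap_inj | exact Hrel | apply swap_other; lia | apply Hnth; assumption].
  unfold x, p, mu in *. fold I' in Hxi', Hxj' |- *.
  rewrite_conf_utils.
  lra.
Qed.

End Incentives.

Theorem mainTheorem18 (M : TFM) (b : list R) (i j k : nat) :
  tfm_ok M -> weak_UIC M -> c_weak_SCP M 2 ->
  nonneg_list b ->
  (i < length b)%nat -> (j < length b)%nat -> (k < length b)%nat ->
  i <> j -> i <> k -> j <> k ->
  x M (zero_at b k) i = true -> x M (zero_at b k) j = true ->
  nth i b 0 - univ_pay M (zero_at b k) > nth k b 0 ->
  nth j b 0 - univ_pay M (zero_at b k) > nth k b 0 ->
  x M b i = true /\ x M b j = true /\
  univ_pay M b <= univ_pay M (zero_at b k) + nth k b 0 / 2.
Proof.
  intros Hok Huic Hscp Hb Hi Hj Hk Hij Hik Hjk Hxi' Hxj' Hgapi Hgapj.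
  assert (Hb' : nonneg_list (zero_at b k)) by (apply nonneg_set_bid; [assumption | lra]).
  assert (Hlen : length (zero_at b k) = length b) by apply length_set_bid.
  assert (Hp'i : univ_pay M (zero_at b k) = p M (zero_at b k) i)
    by (apply univ_pay_conf; auto; lia).
  assert (Hp'j : univ_pay M (zero_at b k) = p M (zero_at b k) j)
    by (apply univ_pay_conf; auto; lia).
  assert (Hxi : x M b i = true) by (apply (conf_of_zero_at M Hok Hscp b k i); auto; lra).
  assert (Hxj : x M b j = true) by (apply (conf_of_zero_at M Hok Hscp b k j); auto; lra).
  assert (Hpi : univ_pay M b = p M b i) by (apply univ_pay_conf; auto).
  assert (Hpj : univ_pay M b = p M b j) by (apply univ_pay_conf; auto).
  pose proof (withdraw_bid M Hok Hscp b k Hb Hk) as Hwithdraw.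
  pose proof (uutil_truthful_nonneg M b (Defs.incl M b) k Hok) as Hk_util.
  pose proof (fake_bid_simulation M Hok Hscp b k i j Hb Hij Hik Hjk Hi Hj Hk
    Hxi' Hxj' Hxi Hxj) as Hfake.
  repeat split; [assumption | assumption | lra].
Qed.
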